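(* Assume the setting described in the context. Let $P$ be the p-matrix with data $(\mathbf a,\mathbf b,\mathbf c,\mathbf d,E,F,G,H)$ such that $F(\mathbf k)\le\widehat\alpha\mathbf k$ and $H(\boldsymbol\ell)\le\widehat\beta\boldsymbol\ell$ for all $\mathbf k,\boldsymbol\ell$ in the respective blocks, and let $(\boldsymbol\kappa;\boldsymbol\lambda;\sigma)\in\mathcal C$. Then the subset $P(\vartheta)=\{\mathbf p\in P:\mathbf p-(\boldsymbol\kappa;\boldsymbol\lambda;\sigma)\in\mathcal C\}$ (the elements of $P$ divisible by $\vartheta=(\alpha^{\boldsymbol\kappa},\beta^{\boldsymbol\lambda})^{(\sigma)}$) is the p-matrix with data $(\mathbf a',\mathbf b,\mathbf c',\mathbf d,E',F',G',H')$, where (maxima of vectors taken componentwise) $\mathbf a'=\max\{\mathbf a,\boldsymbol\kappa\}$, $\mathbf c'=\max\{\mathbf c,\boldsymbol\lambda\}$, $E'(\mathbf k)=\max\{E(\mathbf k),\sigma\}$, $F'(\mathbf k)=\min\{F(\mathbf k),\widehat\alpha(\mathbf k-\boldsymbol\kappa)+\sigma\}$, $G'(\boldsymbol\ell)=\max\{G(\boldsymbol\ell),\sigma\}$, $H'(\boldsymbol\ell)=\min\{H(\boldsymbol\ell),\widehat\beta(\boldsymbol\ell-\boldsymbol\lambda)+\sigma\}$.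
   Context: $\mathbb N=\{0,1,2,\dots\}$. Fix integers $p,q\ge1$, nonnegative integer weight vectors $\widehat\alpha=(\widehat\alpha_1,\dots,\widehat\alpha_p)$, $\widehat\beta=(\widehat\beta_1,\dots,\widehat\beta_q)$ (the weights of Hilbert bases $\alpha,\beta$ of two algebras of $\mathfrak{sl}_2$-seminvariants), and write $\widehat\alpha\mathbf k=\sum\widehat\alpha_ik_i$, $\widehat\beta\boldsymbol\ell=\sum\widehat\beta_j\ell_j$. The transvectant cone is $\mathcal C=\{(\mathbf k;\boldsymbol\ell;s)\in\mathbb N^{p+q+1}:s\le\widehat\alpha\mathbf k,\ s\le\widehat\beta\boldsymbol\ell\}$; $(\mathbf k;\boldsymbol\ell;s)$ represents the transvectant $(\alpha^{\mathbf k},\beta^{\boldsymbol\ell})^{(s)}$. Nonnegative integer intervals: for $a\in\mathbb Z$, $b\in\mathbb Z\cup\{\infty\}$, $[a,b]=\{j\in\mathbb N:a\le j\le b\}$ (with $j<\infty$ if $b=\infty$); negative endpoints are allowed. For vectors, the block $[\mathbf a,\mathbf b]=[a_1,b_1]\times\cdots\times[a_p,b_p]$. A p-matrix with data $(\mathbf a,\mathbf b,\mathbf c,\mathbf d,E,F,G,H)$, where $\mathbf a\in\mathbb Z^p$, $\mathbf b\in(\mathbb Z\cup\{\infty\})^p$, $\mathbf c\in\mathbb Z^q$, $\mathbf d\in(\mathbb Z\cup\{\infty\})^q$, $E,F$ integer-valued functions on $[\mathbf a,\mathbf b]$ and $G,H$ integer-valued functions on $[\mathbf c,\mathbf d]$,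 denotes the set $\{(\mathbf k;\boldsymbol\ell;s)\in\mathbb N^{p+q+1}:\mathbf k\in[\mathbf a,\mathbf b],\ \boldsymbol\ell\in[\mathbf c,\mathbf d],\ s\in[E(\mathbf k),F(\mathbf k)]\cap[G(\boldsymbol\ell),H(\boldsymbol\ell)]\}$. *)

From mathcomp Require Import all_boot all_order all_algebra.
Set Implicit Arguments. Unset Strict Implicit. Unset Printing Implicit Defensive.
Import Order.TTheory GRing.Theory Num.Theory.
Local Open Scope ring_scope.

(* Vectors in N^p are functions 'I_p -> nat; integer endpoints are 'int';
   an upper endpoint in Z ∪ {oo} is an 'option int', with None = oo. *)

Definition inInt (a : int) (b : option int) (j : nat) : Prop :=
  a <= j%:Z /\ (match b with None => True | Some b' => j%:Z <= b' end).

Definition inBlock (n : nat) (a : 'I_n -> int) (b : 'I_n -> option int)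
  (k : 'I_n -> nat) : Prop := forall i, inInt (a i) (b i) (k i).

Definition wsum (n : nat) (w k : 'I_n -> nat) : nat := (\sum_(i < n) w i * k i)%N.

Definition inCone (p q : nat) (alpha : 'I_p -> nat) (beta : 'I_q -> nat)
  (k : 'I_p -> nat) (l : 'I_q -> nat) (s : nat) : Prop :=
  (s <= wsum alpha k)%N /\ (s <= wsum beta l)%N.

(* membership in the p-matrix with data (a,b,c,d,E,F,G,H).
   E F G H are total functions; only their values on the blocks matter. *)
Definition inPmatrix (p q : nat)
  (a : 'I_p -> int) (b : 'I_p -> option int)
  (c : 'I_q -> int) (d : 'I_q -> option int)
  (E F : ('I_p -> nat) -> int) (G H : ('I_q -> nat) -> int)
  (k : 'I_p -> nat) (l : 'I_q -> nat) (s : nat) : Prop :=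
  inBlock a b k /\ inBlock c d l /\
  (E k <= s%:Z /\ s%:Z <= F k) /\ (G l <= s%:Z /\ s%:Z <= H l).

(* (k;l;s) - (kappa;lambda;sigma) ∈ C  (the difference, computed in Z^{p+q+1},
   is an element of C) *)
Definition divisibleBy (p q : nat) (alpha : 'I_p -> nat) (beta : 'I_q -> nat)
  (kappa : 'I_p -> nat) (lambda : 'I_q -> nat) (sigma : nat)
  (k : 'I_p -> nat) (l : 'I_q -> nat) (s : nat) : Prop :=
  exists (k0 : 'I_p -> nat) (l0 : 'I_q -> nat) (s0 : nat),
    [/\ inCone alpha beta k0 l0 s0,
        forall i, k i = (k0 i + kappa i)%N,
        forall j, l j = (l0 j + lambda j)%N &
        s = (s0 + sigma)%N].

From Stdlib Require Import Setoid.
From mathcomp Require Import all_boot all_order all_algebra.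
Import Order.TTheory GRing.Theory Num.Theory.
Local Open Scope ring_scope.

(* Divisibility by (kappa; lambda; sigma) means kappa <= k, lambda <= l,
   sigma <= s, and the cone inequalities for the quotient
   (k - kappa; l - lambda; s - sigma).  Raising the lower bounds of the blocks
   and of s to kappa, lambda, sigma encodes the first three conditions, and the
   cone inequalities become s <= alpha (k - kappa) + sigma and
   s <= beta (l - lambda) + sigma, which are the new upper bounds F', H'. *)

Lemma wsum_shift {n} (w : 'I_n -> nat) {k0 kap k : 'I_n -> nat} :
  (forall i, k i = k0 i + kap i)%N ->
  \sum_(i < n) (w i)%:Z * ((k i)%:Z - (kap i)%:Z) = (wsum w k0)%:Z.
Proof.
move=> ek; rewrite /wsum -natz natr_sum; apply: eq_bigr => i _.
by rewrite ek PoszD addrK natz PoszM.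
Qed.

Lemma inInt_max (a m : int) (b : option int) (j : nat) :
  inInt (Num.max a m) b j <-> inInt a b j /\ m <= j%:Z.
Proof.
rewrite /inInt ge_max.
by split=> [[/andP[ha hm] hb] | [[ha hb] hm]]; rewrite ?ha ?hm.
Qed.

Lemma inBlock_max n (a : 'I_n -> int) (m : 'I_n -> nat) (b : 'I_n -> option int)
    (k : 'I_n -> nat) :
  inBlock (fun i => Num.max (a i) (m i)%:Z) b k <->
  inBlock a b k /\ forall i, (m i <= k i)%N.
Proof.
split=> [hk | [hk hm] i]; last by apply/inInt_max; rewrite lez_nat.
by split=> i; have /inInt_max[? ?] := hk i; rewrite // -lez_nat.
Qed.

Lemma shifted_bound (m sigma s : nat) :
  (sigma <= s)%N -> (s%:Z <= m%:Z + sigma%:Z) = (s - sigma <= m)%N.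
Proof. by move=> hs; rewrite -PoszD lez_nat leq_subLR addnC. Qed.

Lemma divisibleByP p q (alpha : 'I_p -> nat) (beta : 'I_q -> nat)
    (kappa : 'I_p -> nat) (lambda : 'I_q -> nat) (sigma : nat)
    (k : 'I_p -> nat) (l : 'I_q -> nat) (s : nat) :
  divisibleBy alpha beta kappa lambda sigma k l s <->
  [/\ forall i, (kappa i <= k i)%N, forall j, (lambda j <= l j)%N,
      (sigma <= s)%N,
      s%:Z <= \sum_(i < p) (alpha i)%:Z * ((k i)%:Z - (kappa i)%:Z) + sigma%:Z &
      s%:Z <= \sum_(j < q) (beta j)%:Z * ((l j)%:Z - (lambda j)%:Z) + sigma%:Z].
Proof.
split.
  case=> k0 [l0 [s0 [[hk0 hl0] ek el es]]].
  have hs : (sigma <= s)%N by rewrite es leq_addl.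
  rewrite (wsum_shift alpha ek) (wsum_shift beta el) !shifted_bound // es addnK.
  by split=> // [i | j | ]; rewrite ?ek ?el ?es leq_addl.
case=> hk hl hs.
have ek i : k i = (k i - kappa i + kappa i)%N by rewrite subnK.
have el j : l j = (l j - lambda j + lambda j)%N by rewrite subnK.
rewrite (wsum_shift alpha ek) (wsum_shift beta el) !shifted_bound // => hk0 hl0.
by exists (fun i => k i - kappa i)%N, (fun j => l j - lambda j)%N, (s - sigma)%N;
  split; rewrite // subnK.
Qed.

Theorem theorem14p1 (p q : nat) (hp : (0 < p)%N) (hq : (0 < q)%N)
  (alpha : 'I_p -> nat) (beta : 'I_q -> nat)
  (a : 'I_p -> int) (b : 'I_p -> option int)
  (c : 'I_q -> int) (d : 'I_q -> option int)
  (E F : ('I_p -> nat) -> int) (G H : ('I_q -> nat) -> int)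
  (hF : forall k, inBlock a b k -> F k <= (wsum alpha k)%:Z)
  (hH : forall l, inBlock c d l -> H l <= (wsum beta l)%:Z)
  (kappa : 'I_p -> nat) (lambda : 'I_q -> nat) (sigma : nat)
  (hcone : inCone alpha beta kappa lambda sigma) :
  forall (k : 'I_p -> nat) (l : 'I_q -> nat) (s : nat),
    inPmatrix
      (fun i => Num.max (a i) (kappa i)%:Z) b
      (fun j => Num.max (c j) (lambda j)%:Z) d
      (fun k' => Num.max (E k') sigma%:Z)
      (fun k' => Num.min (F k')
         (\sum_(i < p) (alpha i)%:Z * ((k' i)%:Z - (kappa i)%:Z) + sigma%:Z))
      (fun l' => Num.max (G l') sigma%:Z)
      (fun l' => Num.min (H l')
         (\sum_(j < q) (beta j)%:Z * ((l' j)%:Z - (lambda j)%:Z) + sigma%:Z))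
      k l s
    <->
    (inPmatrix a b c d E F G H k l s /\
     divisibleBy alpha beta kappa lambda sigma k l s).
Proof.
move=> k l s; rewrite /inPmatrix divisibleByP !inBlock_max !ge_max !le_min !lez_nat.
split.
  case=> [[hk hkk] [[hl hll] [[/andP[hE hs] /andP[hF' hFs]]
                               [/andP[hG _] /andP[hH' hHs]]]]].
  by split.
by case=> [[hk [hl [[hE hF'] [hG hH']]]] [hkk hll hs hFs hHs]];
  rewrite hE hF' hG hH' hs hFs hHs.
Qed.
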